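(* Let $\mathcal{P}$ be a set of probability distributions on $\mathbb{N}$ with associated i.i.d. model class $\mathcal{P}^\infty$, let $\eta>0$ and $\Pi_0\in\mathbb{R}^+$. An insurer with initial capital $\Pi_0$ can find an insurance scheme $(\tau,\Pi)$ such that, for every $p\in\mathcal{P}^\infty$, the probability under $p$ that $(\tau,\Pi)$ never goes bankrupt is bigger than $1-\eta$, if and only if there is a loss domination scheme $\Phi$ such that for every $p\in\mathcal{P}^\infty$ the probability under $p$ that $\Phi$ goes bankrupt is less than $\eta$.
   Context: Losses $X_1,X_2,\ldots\in\mathbb{N}=\{0,1,2,\ldots\}$; $\mathcal{P}^\infty$ is the set of i.i.d. measures on $\mathbb{N}^\infty$ whose one-dimensional marginals form $\mathcal{P}$. $\mathbb{N}^*$ is the set of finite sequences over $\mathbb{N}$ (including the empty sequence), $x^n=x_1,\ldots,x_n$, $\mathbb{R}^+$ the nonnegative reals. An insurance scheme is a pair $(\tau,\Pi)$ with $\tau:\mathbb{N}^*\to\{0,1\}$ such that $\tau(x_1,\ldots,x_n)=1\Rightarrow\tau(x_1,\ldots,x_{n+1})=1$ and $p(\sup_n\tau(X^n)=1)=1$ for all $p\in\mathcal{P}^\infty$, and $\Pi:\mathbb{N}^*\to\mathbb{R}^+$ with $\Pi(x^n)=0$ when $\tau(x^n)=0$; it goes bankrupt if $\Pi_0+\sum_{i=1}^n(\Pi(X^{i-1})-X_i)\mathbf{1}(\tau(X^{i-1})=1)<0$ for some $n\ge1$. A loss domination scheme is a map $\Phi:\mathbb{N}^*\to\mathbb{R}^+\cup\{\infty\}$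 such that $\Phi(x_1,\ldots,x_n)<\infty\Rightarrow\Phi(x_1,\ldots,x_{n+1})<\infty$ for all $x^n$, and $p(\inf_{n\ge1}\Phi(X^n)<\infty)=1$ for all $p\in\mathcal{P}^\infty$. $\Phi$ goes bankrupt if $\Phi(X^{n-1})<X_n$ for some $n\ge1$. *)

From HB Require Import structures.
From mathcomp Require Import all_boot all_order all_algebra.
From mathcomp Require Import all_classical all_reals all_analysis.
Set Implicit Arguments. Unset Strict Implicit. Unset Printing Implicit Defensive.
Import Order.TTheory GRing.Theory Num.Theory.
Local Open Scope classical_set_scope.
Local Open Scope ring_scope.

(* Sample paths: omega : nat -> nat, with X_{i+1} = omega i (0-indexed). *)
Definition cyl (s : seq nat) : set (nat -> nat) :=
  [set w | forall i, (i < size s)%N -> w i = nth 0%N s i].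

Definition cylinders : set (set (nat -> nat)) := [set cyl s | s in [set: seq nat]].

(* N^infty with the product sigma-algebra (generated by cylinders). *)
Definition seqT := g_sigma_algebraType cylinders.

Definition prefix (w : nat -> nat) (n : nat) : seq nat := mkseq w n.

Definition is_pmf (R : realType) (p : nat -> R) : Prop :=
  (forall k, 0 <= p k) /\ (\sum_(0 <= k <oo) (p k)%:E = 1)%E.

Definition iid_of (R : realType) (p : nat -> R) (P : probability seqT R) : Prop :=
  forall s : seq nat, P (cyl s) = (\prod_(x <- s) p x)%:E.

Definition in_iid_class (R : realType) (calP : set (nat -> R))
  (P : probability seqT R) : Prop :=
  exists2 p, calP p & iid_of p P.

Definition insurance_scheme (R : realType) (calP : set (nat -> R))
  (tau : seq nat -> bool) (Pi : seq nat -> R) : Prop :=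
  [/\ (forall s x, tau s -> tau (rcons s x)),
      (forall P : probability seqT R, in_iid_class calP P ->
         P [set w | exists n, tau (prefix w n)] = 1%E),
      (forall s, 0 <= Pi s) &
      (forall s, ~~ tau s -> Pi s = 0)].

Definition ins_bankrupt (R : realType) (Pi0 : R)
  (tau : seq nat -> bool) (Pi : seq nat -> R) : set (nat -> nat) :=
  [set w | exists n, (1 <= n)%N /\
     Pi0 + \sum_(1 <= i < n.+1)
        (if tau (prefix w i.-1) then Pi (prefix w i.-1) - (w i.-1)%:R else 0) < 0].

Definition loss_domination (R : realType) (calP : set (nat -> R))
  (Phi : seq nat -> \bar R) : Prop :=
  [/\ (forall s, (0 <= Phi s)%E),
      (forall s, Phi s != -oo%E),
      (forall s x, Phi s != +oo%E -> Phi (rcons s x) != +oo%E) &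
      (forall P : probability seqT R, in_iid_class calP P ->
         P [set w | exists n, (1 <= n)%N /\ Phi (prefix w n) != +oo%E] = 1%E)].

Definition ld_bankrupt (R : realType) (Phi : seq nat -> \bar R) : set (nat -> nat) :=
  [set w | exists n, (1 <= n)%N /\ (Phi (prefix w n.-1) < (w n.-1)%:R%:E)%E].

From Pilot Require Import Defs.
From mathcomp Require Import all_boot all_order all_algebra.
From mathcomp Require Import all_classical all_reals all_analysis.
Import Order.TTheory GRing.Theory Num.Theory.
Local Open Scope classical_set_scope.
Local Open Scope ring_scope.
Set Implicit Arguments. Unset Strict Implicit.

(* The equivalence holds path by path.  An insurance scheme yields the loss
   domination scheme "capital plus next premium" (infinite before the
   insurance starts), whose bankruptcies are bankruptcies of the scheme.
   Conversely, a loss domination scheme Phi yields the scheme that starts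
   once Phi is finite and charges just enough premium to bring the capital up
   to Phi; by induction on the path, its capital can only become negative
   after Phi has been beaten by a loss.  Comparing the probabilities of the
   two bankruptcy events gives both implications, for every model class. *)

Lemma prefixS (w : nat -> nat) n :
  Defs.prefix w n.+1 = rcons (Defs.prefix w n) (w n).
Proof. exact: mkseqS. Qed.

Lemma cyl_prefix (w : nat -> nat) n : cyl (Defs.prefix w n) w.
Proof. by move=> i; rewrite size_mkseq => hi; rewrite nth_mkseq. Qed.

Lemma prefix_cyl (w : nat -> nat) s : cyl s w -> Defs.prefix w (size s) = s.
Proof.
move=> ws; apply: (@eq_from_nth _ 0%N); first by rewrite size_mkseq.
by move=> i; rewrite size_mkseq => hi; rewrite nth_mkseq // ws.
Qed.

Lemma measurable_cyl (s : seq nat) : measurable (cyl s : set seqT).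
Proof. by apply: sub_gen_smallest; exists s. Qed.

(* A path event depending on finitely many coordinates is a countable union of
   cylinders, indexed by the (pickled) prefixes that realise it. *)
Lemma measurable_prefix_event (Q : nat -> seq nat -> Prop) :
  measurable ([set w | exists n, Q n (Defs.prefix w n)] : set seqT).
Proof.
pose realises n k := exists s, [/\ unpickle k = Some s, size s = n & Q n s].
have -> : ([set w | exists n, Q n (Defs.prefix w n)] : set seqT) =
    \bigcup_n \bigcup_(k in realises n) cyl (odflt [::] (unpickle k)).
  apply/seteqP; split => w.
    move=> [n Qn]; exists n => //; exists (pickle (Defs.prefix w n)).
      by exists (Defs.prefix w n); rewrite (@pickleK (seq nat)) size_mkseq.
    by rewrite (@pickleK (seq nat)); apply: cyl_prefix.
  move=> [n _ [k [s [-> <- Qs]]] /= ws].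
  by exists (size s); rewrite prefix_cyl.
by apply: bigcup_measurable => n _; apply: bigcup_measurable => k _;
  apply: measurable_cyl.
Qed.

Lemma exists_prefix_pos (Q : seq nat -> bool) (w : nat -> nat) :
  (forall s x, Q s -> Q (rcons s x)) ->
  (exists n, Q (Defs.prefix w n)) <-> (exists n, (1 <= n)%N /\ Q (Defs.prefix w n)).
Proof.
move=> Qrcons; split; last by move=> [n [_ Qn]]; exists n.
by move=> [n Qn]; exists n.+1; split => //; rewrite prefixS; apply: Qrcons.
Qed.

Lemma probability_setC_gt d (T : measurableType d) (R : realType)
    (P : probability T R) (A : set T) (e : R) :
  measurable A -> ((1 - e)%:E < P (~` A))%E = (P A < e%:E)%E.
Proof.
move=> mA; have PA_fin : P A \is a fin_num.
  by rewrite ge0_fin_numE // (le_lt_trans (probability_le1 P mA)) ?ltey.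
by rewrite probability_setC // -(fineK PA_fin) -EFinB !lte_fin ltrD2l ltrN2.
Qed.

Section Capital.
Variables (R : realType) (Pi0 : R) (tau : seq nat -> bool) (Pi : seq nat -> R).

Fixpoint capital_rev (r : seq nat) : R :=
  if r is x :: r' then
    capital_rev r' + (if tau (rev r') then Pi (rev r') - x%:R else 0)
  else Pi0.

(* [capital_rev] reads the history backwards, so that the last loss is the
   head of the list. *)
Definition capital (s : seq nat) : R := capital_rev (rev s).

Lemma capital_rcons s x :
  capital (rcons s x) = capital s + (if tau s then Pi s - x%:R else 0).
Proof. by rewrite /capital rev_rcons /= revK. Qed.

Lemma capital_prefix (w : nat -> nat) n :
  capital (Defs.prefix w n) = Pi0 + \sum_(1 <= i < n.+1)
    (if tau (Defs.prefix w i.-1) then Pi (Defs.prefix w i.-1) - (w i.-1)%:R else 0).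
Proof.
elim: n => [|n IH]; first by rewrite big_geq // addr0.
by rewrite big_nat_recr //= addrA -IH prefixS capital_rcons.
Qed.

Lemma ins_bankruptE :
  ins_bankrupt Pi0 tau Pi =
  [set w | exists n, (1 <= n)%N /\ capital (Defs.prefix w n) < 0].
Proof.
apply/seteqP; split => w [n [n_pos neg]]; exists n; split => //.
  by rewrite capital_prefix.
by rewrite -capital_prefix.
Qed.

Lemma measurable_ins_bankrupt : measurable (ins_bankrupt Pi0 tau Pi : set seqT).
Proof.
rewrite ins_bankruptE.
exact: (measurable_prefix_event (fun n s => (1 <= n)%N /\ capital s < 0)).
Qed.

End Capital.

Lemma ld_bankruptE (R : realType) (Phi : seq nat -> \bar R) :
  ld_bankrupt Phi = [set w | exists n, (1 <= n)%N /\
     exists s x, Defs.prefix w n = rcons s x /\ (Phi s < x%:R%:E)%E].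
Proof.
apply/seteqP; split => w [[|n] [//= _]].
  move=> beaten; exists n.+1; split => //; exists (Defs.prefix w n), (w n).
  by split; first exact: prefixS.
move=> [s [x []]]; rewrite prefixS => /rcons_inj [<- <-] beaten.
by exists n.+1.
Qed.

Lemma measurable_ld_bankrupt (R : realType) (Phi : seq nat -> \bar R) :
  measurable (ld_bankrupt Phi : set seqT).
Proof.
rewrite ld_bankruptE.
exact: (measurable_prefix_event (fun n t => (1 <= n)%N /\
  exists s x, t = rcons s x /\ (Phi s < x%:R%:E)%E)).
Qed.

Section SchemeToLossDomination.
Variables (R : realType) (calP : set (nat -> R)) (Pi0 : R).
Variables (tau : seq nat -> bool) (Pi : seq nat -> R).
Hypothesis scheme : insurance_scheme calP tau Pi.

Definition scheme_reserve (s : seq nat) : \bar R :=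
  if tau s then (Num.max 0 (capital Pi0 tau Pi s + Pi s))%:E else +oo%E.

Lemma scheme_reserve_finite s : (scheme_reserve s != +oo%E) = tau s.
Proof. by rewrite /scheme_reserve; case: (tau s). Qed.

Lemma loss_domination_scheme_reserve : loss_domination calP scheme_reserve.
Proof.
have [tau_rcons tau_starts _ _] := scheme.
split=> [s|s|s x|P PcalP].
- by rewrite /scheme_reserve; case: (tau s); rewrite // lee_fin le_max lexx.
- by rewrite /scheme_reserve; case: (tau s).
- by rewrite !scheme_reserve_finite; apply: tau_rcons.
rewrite -(tau_starts P PcalP); congr (P _); apply/seteqP; split => w /=.
  by move=> [n [_]]; rewrite scheme_reserve_finite; exists n.
by move/(exists_prefix_pos w tau_rcons) => [n]; rewrite -scheme_reserve_finite; exists n.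
Qed.

Lemma ld_bankrupt_scheme_reserve :
  ld_bankrupt scheme_reserve `<=` ins_bankrupt Pi0 tau Pi.
Proof.
move=> w [[|n] [//= _]]; rewrite ins_bankruptE /scheme_reserve.
case: ifP => // tau_n; rewrite lte_fin => beaten; exists n.+1; split => //.
rewrite prefixS capital_rcons tau_n addrA subr_lt0.
by apply: le_lt_trans beaten; rewrite le_max lexx orbT.
Qed.

End SchemeToLossDomination.

Section LossDominationToScheme.
Variables (R : realType) (Pi0 : R) (Phi : seq nat -> \bar R).

Definition ld_tau (s : seq nat) : bool := Phi s != +oo%E.

Fixpoint ld_capital_rev (r : seq nat) : R :=
  if r is x :: r' then
    if ld_tau (rev r') then Num.max (ld_capital_rev r') (fine (Phi (rev r'))) - x%:R
    else ld_capital_rev r'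
  else Pi0.

Definition ld_capital (s : seq nat) : R := ld_capital_rev (rev s).

Lemma ld_capital_rcons s x :
  ld_capital (rcons s x) =
  if ld_tau s then Num.max (ld_capital s) (fine (Phi s)) - x%:R else ld_capital s.
Proof. by rewrite /ld_capital rev_rcons /= revK. Qed.

Definition ld_premium (s : seq nat) : R :=
  if ld_tau s then Num.max 0 (fine (Phi s) - ld_capital s) else 0.

Lemma capital_ld_premium s : capital Pi0 ld_tau ld_premium s = ld_capital s.
Proof.
elim/last_ind: s => [//|s x IH]; rewrite capital_rcons ld_capital_rcons IH.
rewrite /ld_premium; case: (ld_tau s); last by rewrite addr0.
by rewrite addrA addr_maxr addr0 [_ + (_ - _)]addrC subrK.
Qed.

Hypothesis Phi_ninfty : forall s, Phi s != -oo%E.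
Hypothesis Pi0_ge0 : 0 <= Pi0.

(* While the losses stay below Phi, the capital is topped up to Phi before
   each loss and so stays nonnegative. *)
Lemma ld_capital_lt0 (w : nat -> nat) n :
  ld_capital (Defs.prefix w n) < 0 -> ld_bankrupt Phi w.
Proof.
elim: n => [|n IH]; first by rewrite ltNge Pi0_ge0.
rewrite prefixS ld_capital_rcons; case: ifP => [tau_n|_]; last exact: IH.
have [/IH//|_] := ltP (ld_capital (Defs.prefix w n)) 0.
rewrite subr_lt0 => beaten; exists n.+1; split => //=.
have Phi_fin : Phi (Defs.prefix w n) \is a fin_num by rewrite fin_numE Phi_ninfty.
rewrite -(fineK Phi_fin) lte_fin; apply: le_lt_trans beaten.
by rewrite le_max lexx orbT.
Qed.

Lemma ins_bankrupt_ld_premium :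
  ins_bankrupt Pi0 ld_tau ld_premium `<=` ld_bankrupt Phi.
Proof.
by rewrite ins_bankruptE => w [n [_]]; rewrite capital_ld_premium; apply: ld_capital_lt0.
Qed.

Lemma insurance_scheme_ld_premium (calP : set (nat -> R)) :
  loss_domination calP Phi -> insurance_scheme calP ld_tau ld_premium.
Proof.
move=> [_ _ Phi_rcons Phi_finite]; split=> [|P PcalP|s|s].
- exact: Phi_rcons.
- rewrite -(Phi_finite P PcalP); congr (P _); apply/seteqP.
  by split => w; rewrite /= (exists_prefix_pos w Phi_rcons).
- by rewrite /ld_premium; case: ifP; rewrite // le_max lexx.
- by rewrite /ld_premium => /negbTE ->.
Qed.

End LossDominationToScheme.

Theorem mainTheorem2 (R : realType) (calP : set (nat -> R))
  (hP : forall p, calP p -> is_pmf p) (eta Pi0 : R)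
  (heta : 0 < eta) (hPi0 : 0 <= Pi0) :
  (exists (tau : seq nat -> bool) (Pi : seq nat -> R),
     insurance_scheme calP tau Pi /\
     forall P : probability seqT R, in_iid_class calP P ->
       (1 - eta)%:E < P (~` ins_bankrupt Pi0 tau Pi))%E
  <->
  (exists Phi : seq nat -> \bar R,
     loss_domination calP Phi /\
     forall P : probability seqT R, in_iid_class calP P ->
       (P (ld_bankrupt Phi) < eta%:E)%E).
Proof.
split.
- move=> [tau [Pi [scheme survives]]].
  exists (scheme_reserve Pi0 tau Pi); split.
    exact: loss_domination_scheme_reserve scheme.
  move=> P PcalP; apply: le_lt_trans (_ : P (ins_bankrupt Pi0 tau Pi) < _)%E.
    apply: le_measure; [rewrite inE; exact: measurable_ld_bankrupt|
      rewrite inE; exact: measurable_ins_bankrupt|exact: ld_bankrupt_scheme_reserve].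
  by rewrite -(probability_setC_gt P eta (measurable_ins_bankrupt Pi0 tau Pi)) survives.
- move=> [Phi [ld rare]]; have [_ Phi_ninfty _ _] := ld.
  exists (ld_tau Phi), (ld_premium Pi0 Phi); split.
    exact: insurance_scheme_ld_premium ld.
  move=> P PcalP; rewrite probability_setC_gt; last exact: measurable_ins_bankrupt.
  apply: le_lt_trans (rare P PcalP); apply: le_measure;
    [rewrite inE; exact: measurable_ins_bankrupt|rewrite inE; exact: measurable_ld_bankrupt|].
  exact: ins_bankrupt_ld_premium Phi_ninfty hPi0.
Qed.
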